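(* In the setting described in the context, the function $\mathcal{V}$ is continuous on $\mathcal{K}_{\mathcal{D}_{\mathcal{A}}}(\mathbb{R}^n):=\{X\in\mathcal{K}(\mathbb{R}^n): X\cap\mathcal{D}_{\mathcal{A}}\neq\emptyset\}$ with respect to the Hausdorff distance.
   Context: Let $\|\cdot\|$ be a norm on $\mathbb{R}^n$ and $\mathrm{dist}(x,\Omega):=\inf_{y\in\Omega}\|x-y\|$. Let $\mathcal{K}(\mathbb{R}^n)$ denote the nonempty compact subsets of $\mathbb{R}^n$, equipped with the Hausdorff distance $d_H(X,Y):=\max\{\sup_{x\in X}\mathrm{dist}(x,Y),\sup_{y\in Y}\mathrm{dist}(y,X)\}$. Consider $x_{k+1}=f(x_k,u_k)$ with $f:\mathbb{R}^n\times\mathbb{R}^m\to\mathbb{R}^n$ continuous and inputs $u_k\in U$, $U\subset\mathbb{R}^m$ nonempty compact. For $x\in\mathbb{R}^n$ and $\pi:\mathbb{Z}_+\to U$, $\varphi_x^\pi(0)=x$, $\varphi_x^\pi(k+1)=f(\varphi_x^\pi(k),\pi(k))$; $\mathcal{R}(X,k):=\{\varphi_x^\pi(k):x\in X,\pi\in U^{\mathbb{Z}_+}\}$. Let $\mathcal{A}\in\mathcal{K}(\mathbb{R}^n)$ be controlled invariant (every $x\in\mathcal{A}$ admits $u\in U$ with $f(x,u)\in\mathcal{A}$). Assume local $\ell_p$-stabilizability: there exist $r>0$, $M\ge1$, $p>0$, $\lambda:[0,r]\times\mathbb{Z}_+\to\mathbb{R}_+$ such that (1) for each $k$, $s\mapsto\lambda(s,k)$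 is continuous, nondecreasing, $\lambda(0,k)=0$; for each $s$, $k\mapsto\lambda(s,k)$ is nonincreasing, $\lambda(s,0)\le s$; (2) $\sum_{k}\lambda(r,k)^p<\infty$; (3) for every $x$ with $\mathrm{dist}(x,\mathcal{A})\le r$ there is $\pi\in U^{\mathbb{Z}_+}$ with $\mathrm{dist}(\varphi_x^\pi(k),\mathcal{A})\le M\lambda(\mathrm{dist}(x,\mathcal{A}),k)$ for all $k$. Let $\mathcal{D}_{\mathcal{A}}:=\{x:\exists\pi\in U^{\mathbb{Z}_+},\ \lim_{k\to\infty}\mathrm{dist}(\varphi_x^\pi(k),\mathcal{A})=0\}$. Let $\alpha:\mathbb{R}^n\to\mathbb{R}_+$ be continuous with $\underline{\alpha}\,\mathrm{dist}(x,\mathcal{A})^{\bar p}\le\alpha(x)\le\overline{\alpha}\,\mathrm{dist}(x,\mathcal{A})^{\bar p}$, constants $\underline{\alpha},\overline{\alpha}>0$, $\bar p\ge p$. Define $\Psi(X):=\inf_{y\in X}\alpha(y)$ and $\mathcal{V}(X):=\sum_{k=0}^\infty\Psi(\mathcal{R}(X,k))\in[0,\infty]$. *)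

(* States live in 'rV[R]_n, inputs in 'rV[R]_m,
   carrying the standard (product/sup-norm) topology used for continuity and
   compactness (all norms on R^n are equivalent); distances are measured with an
   arbitrary norm [nrm] on R^n, as in the paper. *)
From HB Require Import structures.
From mathcomp Require Import all_boot all_order all_algebra.
From mathcomp Require Import all_classical all_reals all_analysis.
Set Implicit Arguments. Unset Strict Implicit. Unset Printing Implicit Defensive.
Import Order.TTheory GRing.Theory Num.Theory.
Import numFieldNormedType.Exports.
Local Open Scope classical_set_scope.
Local Open Scope ring_scope.

Section Defs.
Variables (R : realType) (n m : nat).
Notation X := 'rV[R]_n.
Notation Uty := 'rV[R]_m.

Definition is_norm (nrm : X -> R) : Prop :=
  [/\ forall x, nrm x = 0 -> x = 0,
      forall (a : R) x, nrm (a *: x) = `|a| * nrm x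
    & forall x y, nrm (x + y) <= nrm x + nrm y].

Definition distS (nrm : X -> R) (x : X) (Om : set X) : R :=
  inf [set nrm (x - y) | y in Om].

Definition dH (nrm : X -> R) (A B : set X) : R :=
  Num.max (sup [set distS nrm x B | x in A]) (sup [set distS nrm y A | y in B]).

Fixpoint traj (f : X -> Uty -> X) (x : X) (pi : nat -> Uty) (k : nat) : X :=
  if k is k'.+1 then f (traj f x pi k') (pi k') else x.

Definition inputs (U : set Uty) : set (nat -> Uty) := [set pi | forall k, U (pi k)].

Definition reach (f : X -> Uty -> X) (U : set Uty) (S : set X) (k : nat) : set X :=
  [set z | exists x, exists pi, [/\ S x, inputs U pi & z = traj f x pi k]].

Definition ctrl_invariant (f : X -> Uty -> X) (U : set Uty) (A : set X) : Prop :=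
  forall x, A x -> exists u, U u /\ A (f x u).

Definition DA (nrm : X -> R) (f : X -> Uty -> X) (U : set Uty) (A : set X) : set X :=
  [set x | exists pi, inputs U pi /\
     (fun k => distS nrm (traj f x pi k) A) @ \oo --> (0 : R)].

Definition lp_stabilizable (nrm : X -> R) (f : X -> Uty -> X) (U : set Uty)
  (A : set X) (r M p : R) (lam : R -> nat -> R) : Prop :=
  [/\ 0 < r, 1 <= M & 0 < p] /\
      (forall k,
         {within `[0, r], continuous (fun s => lam s k)} /\
         (forall s t, s \in `[0, r] -> t \in `[0, r] -> s <= t -> lam s k <= lam t k) /\
         lam 0 k = 0) /\
      (forall s, s \in `[0, r] ->
          (forall k l : nat, (k <= l)%N -> lam s l <= lam s k) /\
          lam s 0 <= s /\
          (forall k, 0 <= lam s k)) /\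
      (\sum_(0 <= k <oo) ((lam r k `^ p)%:E) < +oo)%E /\
      (forall x, distS nrm x A <= r ->
        exists pi, inputs U pi /\
          forall k, distS nrm (traj f x pi k) A <= M * lam (distS nrm x A) k).

Definition Psi (alpha : X -> R) (S : set X) : R := inf [set alpha y | y in S].

Definition Vfun (alpha : X -> R) (f : X -> Uty -> X) (U : set Uty) (S : set X)
  : \bar R :=
  (\sum_(0 <= k <oo) ((Psi alpha (reach f U S k))%:E))%E.

Definition KD (D : set X) : set (set X) :=
  [set S | compact S /\ S !=set0 /\ (S `&` D) !=set0].

End Defs.

From HB Require Import structures.
From mathcomp Require Import all_boot all_order all_algebra.
From mathcomp Require Import all_classical all_reals all_analysis.
From mathcomp Require Import lra.
Import Order.TTheory GRing.Theory Num.Theory.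
Import numFieldNormedType.Exports.
Local Open Scope classical_set_scope.
Local Open Scope ring_scope.

(* Each term [Psi alpha (reach f U X k)] of [V] is continuous in [X] for the Hausdorff distance:
   upper semicontinuity comes from the continuity of [alpha] along a single trajectory, lower
   semicontinuity from the continuity of the [k]-step trajectories on the compact set [X], uniform
   in the inputs. If [x0 \in X] lies in the domain of attraction, some inputs steer [x0], and
   hence every point near [x0], into the [r]-neighbourhood of [A]; from there the l_p-stabilizing
   inputs bound the later terms by [ahi * M `^ pbar * lam r k `^ pbar], which is summable because
   [pbar >= p]. So the tails of [V Y] are uniformly small for [Y] near [X], and the series is
   continuous at [X]. The arbitrary norm on R^n is compared with the sup norm of the topology
   through the equivalence of norms. *)

(* Needed for the pointed topological structure on products used by [compact_cover]. *)
HB.saturate prod.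

Section NormEquivalence.
Context {R : realType} {n : nat} {nrm : 'rV[R]_n -> R}.
Hypothesis nrmP : is_norm nrm.

Lemma nrm0 : nrm 0 = 0.
Proof. by case: nrmP => _ nrmZ _; rewrite -(scale0r 0) nrmZ normr0 mul0r. Qed.

Lemma nrmN x : nrm (- x) = nrm x.
Proof. by case: nrmP => _ nrmZ _; rewrite -scaleN1r nrmZ normrN normr1 mul1r. Qed.

Lemma nrmB x y : nrm (x - y) = nrm (y - x).
Proof. by rewrite -nrmN opprB. Qed.

Lemma nrm_triangleB x y z : nrm (x - z) <= nrm (x - y) + nrm (y - z).
Proof. by case: nrmP => _ _ nrmD; have := nrmD (x - y) (y - z); rewrite addrA subrK. Qed.

Lemma nrm_ge0 x : 0 <= nrm x.
Proof.
by have := nrm_triangleB x 0 x; rewrite subrr nrm0 sub0r nrmN subr0 => ?; lra.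
Qed.

Lemma nrm_sum {I : Type} (s : seq I) (F : I -> 'rV[R]_n) :
  nrm (\sum_(i <- s) F i) <= \sum_(i <- s) nrm (F i).
Proof.
case: nrmP => _ _ nrmD; elim: s => [|a s IH]; first by rewrite !big_nil nrm0.
by rewrite !big_cons (le_trans (nrmD _ _)) // lerD2l.
Qed.

Lemma nrm_le_mx_norm : exists2 C : R, 0 < C & forall x, nrm x <= C * `|x|.
Proof.
case: nrmP => _ nrmZ _.
exists (1 + \sum_(j < n) nrm 'e_j) => [|x].
  by rewrite ltr_pwDl // sumr_ge0 // => j _; exact: nrm_ge0.
rewrite {1}(row_sum_delta x) (le_trans (nrm_sum _ _)) //.
under eq_bigr => j _ do rewrite nrmZ.
rewrite mulrDl mul1r ler_wpDl // mulr_suml ler_sum // => j _.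
rewrite mulrC ler_wpM2l ?nrm_ge0 //.
rewrite [leRHS]mx_normrE.
exact: (le_bigmax _ (fun ij : 'I_1 * 'I_n => `|x ij.1 ij.2|) (ord0, j)).
Qed.

Lemma nrm_lipschitz x y : `|nrm x - nrm y| <= nrm (x - y).
Proof.
have := nrm_triangleB x y 0; have := nrm_triangleB y x 0.
rewrite !subr0 (nrmB y x) ler_norml => h1 h2.
by apply/andP; split; lra.
Qed.

Lemma nrm_lipschitz_continuous (g : 'rV[R]_n -> R) :
  (forall x y, `|g x - g y| <= nrm (x - y)) -> continuous g.
Proof.
have [C C0 leC] := nrm_le_mx_norm.
move=> g_lip x P /nbhs_ballP [e e0 eP]; apply/nbhs_ballP; exists (e / C) => [|y].
  by rewrite /= divr_gt0.
rewrite -ball_normE /= => xy; apply: eP; rewrite -ball_normE /=.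
by rewrite (le_lt_trans (g_lip _ _)) // (le_lt_trans (leC _)) // mulrC -ltr_pdivlMr.
Qed.

Lemma nrm_continuous : continuous nrm.
Proof. exact: nrm_lipschitz_continuous nrm_lipschitz. Qed.

(* [nrm] is continuous and vanishes nowhere on the compact unit sphere of the sup norm. *)
Lemma nrm_ge_mx_norm : exists2 c : R, 0 < c & forall x, c * `|x| <= nrm x.
Proof.
case: nrmP => nrm_eq0 nrmZ _.
pose S := [set x : 'rV[R]_n | `|x| = 1].
have cS : compact S.
  apply: bounded_closed_compact.
    by exists 1; split => // M M1 x /= ->; exact: ltW.
  rewrite (_ : S = (fun x => `|x|) @^-1` [set 1]) //.
  by apply: preimage_closed; [move=> x _; exact: norm_continuous | exact: closed_eq].
have cK : compact (nrm @` S).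
  by apply: continuous_compact cS; exact: continuous_subspaceT nrm_continuous.
have : nbhs (0 : R) (~` (nrm @` S)).
  apply: open_nbhs_nbhs; split.
    by apply: closed_openC; apply: compact_closed cK; exact: norm_hausdorff.
  move=> [x Sx /nrm_eq0 x0]; move: Sx.
  by rewrite /S /= x0 normr0 => /esym/eqP; rewrite oner_eq0.
move=> /nbhs_ballP [c c0 hc]; exists c => // x.
have [->|x0] := eqVneq x 0; first by rewrite normr0 mulr0 nrm0.
have nx0 : 0 < `|x| by rewrite normr_gt0.
have Sx : S (`|x|^-1 *: x) by rewrite /S /= normrZ normfV normr_id mulVf // gt_eqF.
have : ~ ball (0 : R) c (nrm (`|x|^-1 *: x)) by move=> /hc; apply; exists (`|x|^-1 *: x).
rewrite -ball_normE /= sub0r normrN nrmZ normfV normr_id ger0_norm; last first.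
  by rewrite mulr_ge0 ?nrm_ge0 // invr_ge0 ltW.
by move/negP; rewrite -leNgt -ler_pdivlMr // mulrC.
Qed.

End NormEquivalence.

Section UniformContinuity.
Context {R : realType}.

Lemma bigmin_gt0 {I : Type} (s : seq I) (F : I -> R) :
  (forall i, 0 < F i) -> 0 < \big[Num.min/1]_(i <- s) F i.
Proof.
move=> F0; elim: s => [|a s IH]; first by rewrite big_nil.
by rewrite big_cons lt_min F0 IH.
Qed.

Lemma bigmin_le {I : eqType} (s : seq I) (F : I -> R) i :
  i \in s -> \big[Num.min/1]_(j <- s) F j <= F i.
Proof.
elim: s => [//|a s IH]; rewrite in_cons big_cons => /orP [/eqP ->|/IH h].
  by rewrite ge_min lexx.
by rewrite ge_min h orbT.
Qed.

(* Heine-Cantor, in the slightly stronger form where only [x] is required to lie in [K]. *)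
Lemma compact_unif_continuous {T V : pseudoMetricType R} {K : set T} {g : T -> V} :
  cover_compact K -> {in K, continuous g} ->
  forall e, 0 < e -> exists2 d, 0 < d &
    forall x y, K x -> ball x d y -> ball (g x) e (g y).
Proof.
move=> cK gc e e0.
have e2 : 0 < e / 2 by rewrite divr_gt0.
have /choice [d dP] : forall x, exists d : R, 0 < d /\
    (K x -> forall y, ball x d y -> ball (g x) (e / 2) (g y)).
  move=> x; have [Kx|] := pselect (K x); last by exists 1.
  have /nbhs_ballP [d d0 hd] := gc x (mem_set Kx) _ (nbhsx_ballx (g x) _ e2).
  by exists d; split => // _ y /hd.
have d0 x : 0 < d x / 2 by rewrite divr_gt0 // (dP x).1.
have [] := cK T K (fun x => interior (ball x (d x / 2))).
- by move=> i _; exact: open_interior.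
- by move=> x Kx; exists x => //; exact: nbhsx_ballx.
move=> D DK Dcover.
exists (\big[Num.min/1]_(i <- finmap.enum_fset D) (d i / 2)); first exact: bigmin_gt0.
move=> x y Kx xy; have [i Di ix] := Dcover x Kx.
have Ki : K i by move: (DK i Di); rewrite inE.
have {}ix : ball i (d i / 2) x by exact: interior_subset.
have iy : ball i (d i) y.
  have := ball_triangle ix (le_ball (bigmin_le _ (fun j => d j / 2) _ Di) xy).
  by apply: le_ball; have := (dP i).1; lra.
have {}ix : ball i (d i) x by apply: le_ball ix; have := (dP i).1; lra.
rewrite (splitr e); apply: ball_triangle (ball_sym ((dP i).2 Ki _ ix)) _.
exact: (dP i).2 Ki _ iy.
Qed.

End UniformContinuity.

Section Trajectories.
Context {R : realType} {n m : nat} {f : 'rV[R]_n -> 'rV[R]_m -> 'rV[R]_n}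
  {U : set 'rV[R]_m}.
Hypothesis f_cont : continuous (fun xu : 'rV[R]_n * 'rV[R]_m => f xu.1 xu.2).
Hypothesis U_compact : compact U.
Hypothesis U_neq0 : U !=set0.

Lemma traj_prefix x (pi pi' : nat -> 'rV[R]_m) k :
  (forall j, (j < k)%N -> pi j = pi' j) -> traj f x pi k = traj f x pi' k.
Proof.
elim: k => [//|k IH] eq_pi /=.
by rewrite IH => [|j jk]; rewrite eq_pi // ltnW.
Qed.

Definition cat_inputs (K : nat) (pi pi' : nat -> 'rV[R]_m) : nat -> 'rV[R]_m :=
  fun j => if (j < K)%N then pi j else pi' (j - K)%N.

Lemma inputs_cat K pi pi' :
  inputs U pi -> inputs U pi' -> inputs U (cat_inputs K pi pi').
Proof. by move=> Upi Upi' j; rewrite /cat_inputs; case: ifP. Qed.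

Lemma traj_cat x K pi pi' j :
  traj f x (cat_inputs K pi pi') (K + j) = traj f (traj f x pi K) pi' j.
Proof.
elim: j => [|j IH].
  by rewrite addn0; apply: traj_prefix => i iK; rewrite /cat_inputs iK.
by rewrite addnS /= IH /cat_inputs ltnNge leq_addr /= addKn.
Qed.

Lemma reach0 S : reach f U S 0 = S.
Proof.
apply/seteqP; split => [z [x [pi [Sx _ ->]]] //|z Sz].
by have [u Uu] := U_neq0; exists z, (fun=> u); split.
Qed.

Lemma reachS S k :
  reach f U S k.+1 = (fun z => f z.1 z.2) @` (reach f U S k `*` U).
Proof.
apply/seteqP; split => z.
  move=> [x [pi [Sx Upi ->]]].
  by exists (traj f x pi k, pi k) => //; split => //=; exists x, pi.
move=> [[z1 u] [[x [pi [Sx Upi ->]]] /= Uu] <-] /=.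
exists x, (fun j => if j == k then u else pi j); split => [//|j|/=].
  by case: ifP.
by rewrite eqxx; congr f; apply: traj_prefix => j jk; rewrite ltn_eqF.
Qed.

Lemma reach_neq0 S k : S !=set0 -> reach f U S k !=set0.
Proof.
move=> [x Sx]; have [u Uu] := U_neq0.
by exists (traj f x (fun=> u) k), x, (fun=> u); split.
Qed.

Lemma reach_compact S k : compact S -> compact (reach f U S k).
Proof.
move=> cS; elim: k => [|k IH]; first by rewrite reach0.
rewrite reachS; apply: continuous_compact; last exact: compact_setX.
exact: continuous_subspaceT.
Qed.

Lemma traj_continuous pi k : continuous (fun x => traj f x pi k).
Proof.
elim: k => [|k IH] x /=; first exact: cvg_id.
exact: (continuous_comp (cvg_pair (IH x) (cvg_cst (pi k))) (f_cont _)).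
Qed.

(* The modulus of continuity of the [k]-step trajectory on a compact set is uniform in the inputs,
   because [f] is uniformly continuous on the compact set [reach f U S k `*` U]. *)
Lemma traj_unif_continuous S k : compact S -> forall e, 0 < e -> exists2 d, 0 < d &
  forall x y pi, S x -> inputs U pi -> ball x d y ->
    ball (traj f x pi k) e (traj f y pi k).
Proof.
move=> cS; elim: k => [|k IH] e e0; first by exists e.
have cK := compact_setX (reach_compact S k cS) U_compact; rewrite compact_cover in cK.
have [eta eta0 etaP] := compact_unif_continuous cK (fun z _ => f_cont z) _ e0.
have [d d0 dP] := IH eta eta0.
exists d => // x y pi Sx Upi xy /=.
apply: (etaP (traj f x pi k, pi k) (traj f y pi k, pi k)).
  by split => //=; exists x, pi.
by split => /=; [exact: dP | exact: ballxx].
Qed.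

End Trajectories.

Definition hausdorff_close {R : numDomainType} {T : pseudoMetricType R} (d : R) (X Y : set T) :=
  (forall x, X x -> exists2 y, Y y & ball x d y) /\ (forall y, Y y -> exists2 x, X x & ball x d y).

Section Distance.
Context {R : realType} {n : nat} {nrm : 'rV[R]_n -> R}.
Hypothesis nrmP : is_norm nrm.

Lemma distS_ge0 x (Om : set 'rV[R]_n) : Om !=set0 -> 0 <= distS nrm x Om.
Proof.
move=> [y Omy]; apply: lb_le_inf; first by exists (nrm (x - y)), y.
by move=> _ [z _ <-]; exact: nrm_ge0.
Qed.

Lemma distS_le {x y : 'rV[R]_n} {Om : set 'rV[R]_n} : Om y -> distS nrm x Om <= nrm (x - y).
Proof.
move=> Omy; apply: ge_inf; last by exists y.
by exists 0 => _ [z _ <-]; exact: nrm_ge0.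
Qed.

Lemma distS_lt x (Om : set 'rV[R]_n) d : Om !=set0 -> distS nrm x Om < d ->
  exists2 y, Om y & nrm (x - y) < d.
Proof.
move=> [y0 Omy0] /inf_lt [|_ [y Omy <-] xy]; last by exists y.
by exists (nrm (x - y0)), y0.
Qed.

Lemma distS_triangle x z {Om : set 'rV[R]_n} : Om !=set0 ->
  distS nrm x Om <= distS nrm z Om + nrm (x - z).
Proof.
move=> [y0 Omy0]; rewrite -lerBlDr; apply: lb_le_inf; first by exists (nrm (z - y0)), y0.
move=> _ [y Omy <-]; rewrite lerBlDr addrC (le_trans (distS_le Omy)) //.
exact: nrm_triangleB.
Qed.

Lemma distS_continuous {Om : set 'rV[R]_n} : Om !=set0 ->
  continuous (fun x => distS nrm x Om).
Proof.
move=> Om0; apply: (nrm_lipschitz_continuous nrmP (fun x => distS nrm x Om)) => x y.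
rewrite ler_norml.
have := distS_triangle x y Om0; have := distS_triangle y x Om0.
by rewrite (nrmB nrmP y x) => h1 h2; apply/andP; split; lra.
Qed.

Lemma dH_lt (X Y : set 'rV[R]_n) d : compact X -> X !=set0 -> compact Y -> Y !=set0 ->
  dH nrm X Y < d ->
  (forall x, X x -> exists2 y, Y y & nrm (x - y) < d) /\
  (forall y, Y y -> exists2 x, X x & nrm (y - x) < d).
Proof.
have [C C0 leC] := nrm_le_mx_norm nrmP.
have distS_ub (S T : set 'rV[R]_n) : compact S -> T !=set0 ->
    has_ubound [set distS nrm x T | x in S].
  move=> /compact_bounded [M [_ SM]] [t Tt]; exists (C * (M + 1 + `|t|)).
  move=> _ [x Sx <-]; rewrite (le_trans (distS_le Tt)) // (le_trans (leC _)) //.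
  rewrite ler_pM2l // (le_trans (ler_normB _ _)) // lerD2r.
  by apply: (SM (M + 1) _ x Sx); rewrite ltrDl.
move=> cX X0 cY Y0 XY; split => [x Xx|y Yy]; apply: distS_lt => //;
  apply: le_lt_trans XY; rewrite le_max.
- by apply/orP; left; apply: ub_le_sup; [exact: distS_ub | exists x].
- by apply/orP; right; apply: ub_le_sup; [exact: distS_ub | exists y].
Qed.

Lemma dH_lt_ball : exists2 c : R, 0 < c & forall (X Y : set 'rV[R]_n) d,
  compact X -> X !=set0 -> compact Y -> Y !=set0 -> dH nrm X Y < c * d ->
  hausdorff_close d X Y.
Proof.
have [c c0 lec] := nrm_ge_mx_norm nrmP.
have nrm_ball x y d : nrm (x - y) < c * d -> ball y d x.
  move=> xy; rewrite -ball_normE /= -opprB normrN -(ltr_pM2l c0).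
  exact: le_lt_trans (lec _) xy.
exists c => // X Y d cX X0 cY Y0 /dH_lt[] // XY YX; split => [x /XY|y /YX].
  by move=> [y Yy /nrm_ball xy]; exists y => //; exact: ball_sym.
by move=> [x Xx /nrm_ball yx]; exists x.
Qed.

End Distance.

Section Series.
Context {R : realType}.

Lemma nneseries_bounds {a : nat -> R} {K : nat} {B : R} :
  (forall k, 0 <= a k) -> (forall L, \sum_(K <= k < L) a k <= B) ->
  exists2 v : R, (\sum_(0 <= k <oo) (a k)%:E = v%:E)%E &
    \sum_(0 <= k < K) a k <= v <= \sum_(0 <= k < K) a k + B.
Proof.
move=> a0 tailB.
have B0 : 0 <= B by have := tailB K; rewrite big_geq.
have lo : ((\sum_(0 <= k < K) a k)%:E <= \sum_(0 <= k <oo) (a k)%:E)%E.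
  by rewrite -sumEFin; apply: nneseries_lim_ge => k _ _; rewrite lee_fin.
have up : (\sum_(0 <= k <oo) (a k)%:E <= (\sum_(0 <= k < K) a k + B)%:E)%E.
  apply: lime_le; first by apply: is_cvg_nneseries => k _ _; rewrite lee_fin.
  apply: nearW => L; rewrite sumEFin lee_fin.
  have [LK|KL] := leqP L K; last first.
    by rewrite (@big_cat_nat _ _ _ K) //= ?lerD2l // ltnW.
  rewrite (@big_cat_nat _ _ _ L 0 K) //= -addrA lerDl addr_ge0 //.
  exact: sumr_ge0.
have fin : (\sum_(0 <= k <oo) (a k)%:E)%E \is a fin_num.
  rewrite ge0_fin_numE ?(le_lt_trans up) ?ltry //.
  by apply: le_trans lo; rewrite lee_fin sumr_ge0.
by exists (fine (\sum_(0 <= k <oo) (a k)%:E)%E); rewrite ?fineK // -!lee_fin fineK ?lo.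
Qed.

Lemma nneseries_tail_le {u : nat -> R} : (forall k, 0 <= u k) ->
  (\sum_(0 <= k <oo) (u k)%:E < +oo)%E ->
  forall e, 0 < e -> exists J, forall L, \sum_(J <= k < L) u k <= e.
Proof.
move=> u0 u_fin e e0.
have u0E k : (0 <= (u k)%:E)%E by rewrite lee_fin.
have /fine_cvgP [tail_fin tail_cvg] := nneseries_tail_cvg u_fin (fun k _ => u0E k).
have [J _ JP] := filterI tail_fin (cvgr_lt _ tail_cvg _ e0).
exists J => L; have [Jfin Jlt] := JP J (leqnn J).
rewrite -lee_fin -sumEFin (le_trans (nneseries_lim_ge _ (fun k _ _ => u0E k))) //.
by rewrite -(fineK Jfin) lee_fin ltW.
Qed.

(* Beyond the index [J], every [w k `^ p] is at most 1, hence so is [w k],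
   and then [w k `^ q <= w k `^ p]. *)
Lemma powR_tail_le {w : nat -> R} {p q : R} :
  (forall k, 0 <= w k) -> 0 < p -> p <= q ->
  (\sum_(0 <= k <oo) (w k `^ p)%:E < +oo)%E ->
  forall e, 0 < e -> exists J, forall L, \sum_(J <= k < L) w k `^ q <= e.
Proof.
move=> w0 p0 pq w_fin e e0.
have e1 : 0 < Num.min e 1 by rewrite lt_min e0 ltr01.
have [J JP] := nneseries_tail_le (fun k => powR_ge0 (w k) p) w_fin _ e1.
have wq_le k : (J <= k)%N -> w k `^ q <= w k `^ p.
  move=> Jk; have wp1 : w k `^ p <= 1.
    have wpS : w k `^ p <= \sum_(J <= i < k.+1) w i `^ p.
      by rewrite big_nat_recr //= lerDr sumr_ge0 // => i _; exact: powR_ge0.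
    by rewrite (le_trans wpS) // (le_trans (JP _)) // ge_min lexx orbT.
  have w1 : w k <= 1.
    rewrite leNgt; apply/negP => w1.
    have : 1 `^ p < w k `^ p by rewrite gt0_ltr_powR // nnegrE ?w0.
    by rewrite powR1 ltNge wp1.
  have [->|wk0] := eqVneq (w k) 0; first by rewrite !powR0 ?gt_eqF // (lt_le_trans p0).
  by rewrite ger_powR // lt_neqAle eq_sym wk0 w0.
exists J => L; apply: (@le_trans _ _ (\sum_(J <= k < L) w k `^ p)).
  by apply: ler_sum_nat => k /andP [Jk _]; exact: wq_le.
by apply: le_trans (JP L) _; rewrite ge_min lexx.
Qed.

(* Tannery's theorem for nonnegative series, along an arbitrary filter. *)
Lemma nneseries_cvg {T : Type} (F : set_system T) {FF : Filter F} (a : T -> nat -> R) X :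
  (forall Y k, 0 <= a Y k) -> (forall k, a Y k @[Y --> F] --> a X k) ->
  (forall e, 0 < e -> exists K, (forall L, \sum_(K <= k < L) a X k <= e) /\
     \forall Y \near F, forall L, \sum_(K <= k < L) a Y k <= e) ->
  (\sum_(0 <= k <oo) (a Y k)%:E)%E @[Y --> F] --> (\sum_(0 <= k <oo) (a X k)%:E)%E.
Proof.
move=> a0 a_cvg tails.
have [K1 [XK1 YK1]] := tails 1 ltr01.
have [vX VX _] := nneseries_bounds (a0 X) XK1.
rewrite VX; apply/fine_cvgP; split.
  by apply: filterS YK1 => Y /(nneseries_bounds (a0 Y)) [v -> _].
apply/cvgrPdist_le => e e0; have e3 : 0 < e / 3 by rewrite divr_gt0.
have [K [XK YK]] := tails _ e3.
have [vX' VX' /andP [lX uX]] := nneseries_bounds (a0 X) XK.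
move: VX'; rewrite VX => -[eqvX]; rewrite -{}eqvX in lX uX.
have /cvgrPdist_le /(_ _ e3) partial_close :
    \sum_(0 <= k < K) a Y k @[Y --> F] --> \sum_(0 <= k < K) a X k.
  by apply: cvg_big => //; exact: add_continuous.
apply: filterS (filterI YK partial_close) => Y [/(nneseries_bounds (a0 Y))].
move=> [vY VY /andP [lY uY]]; rewrite /= VY /= !ler_norml => /andP [h1 h2].
by apply/andP; split; lra.
Qed.

End Series.

Section ValueFunction.
Context {R : realType} {n m : nat} {f : 'rV[R]_n -> 'rV[R]_m -> 'rV[R]_n}
  {U : set 'rV[R]_m} {alpha : 'rV[R]_n -> R}.
Hypothesis f_cont : continuous (fun xu : 'rV[R]_n * 'rV[R]_m => f xu.1 xu.2).
Hypothesis U_compact : compact U.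
Hypothesis U_neq0 : U !=set0.
Hypothesis alpha_cont : continuous alpha.
Hypothesis alpha_ge0 : forall x, 0 <= alpha x.

Local Notation P k S := (Psi alpha (reach f U S k)).

Lemma Psi_le {S z} : S z -> Psi alpha S <= alpha z.
Proof.
by move=> Sz; apply: ge_inf; [exists 0 => _ [y _ <-] | exists z].
Qed.

Lemma Psi_ge S c : S !=set0 -> (forall z, S z -> c <= alpha z) -> c <= Psi alpha S.
Proof.
move=> [z Sz] cS; apply: lb_le_inf; first by exists (alpha z), z.
by move=> _ [y Sy <-]; exact: cS.
Qed.

Lemma Psi_ge0 S : 0 <= Psi alpha S.
Proof.
have [->|S0] := eqVneq S set0; last by apply: Psi_ge => //; exact/set0P.
by rewrite /Psi image_set0 inf0.
Qed.

Lemma Psi_reach_usc k {X : set 'rV[R]_n} {e : R} : X !=set0 -> 0 < e -> exists2 d, 0 < d &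
  forall Y, (forall x, X x -> exists2 y, Y y & ball x d y) -> P k Y <= P k X + e.
Proof.
move=> X0 e0.
have [_ [_ [x [pi [Xx Upi ->]]] <-] alpha_lt] :
    exists2 a, [set alpha z | z in reach f U X k] a & a < P k X + e.
  apply: inf_lt; last by rewrite ltrDl.
  by have [z Xz] := reach_neq0 (f := f) U_neq0 X k X0; exists (alpha z), z.
have /nbhs_ballP [d d0 dP] : \forall y \near x, alpha (traj f y pi k) < P k X + e.
  have alpha_traj_cvg : alpha (traj f y pi k) @[y --> x] --> alpha (traj f x pi k).
    exact: continuous_comp (traj_continuous f_cont pi k x) (alpha_cont _).
  exact: cvgr_lt _ alpha_traj_cvg _ alpha_lt.
exists d => // Y /(_ x Xx) [y Yy /dP y_lt].
by rewrite ltW // (le_lt_trans _ y_lt) //; apply: Psi_le; exists y, pi.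
Qed.

Lemma Psi_reach_lsc k {X : set 'rV[R]_n} {e : R} : compact X -> 0 < e -> exists2 d, 0 < d &
  forall Y, Y !=set0 -> (forall y, Y y -> exists2 x, X x & ball x d y) ->
    P k X <= P k Y + e.
Proof.
move=> X_compact e0.
have := reach_compact f_cont U_compact U_neq0 X k X_compact; rewrite compact_cover => cRX.
have [eta eta0 etaP] := compact_unif_continuous cRX (fun z _ => alpha_cont z) _ e0.
have [d d0 dP] := traj_unif_continuous f_cont U_compact U_neq0 X k X_compact _ eta0.
exists d => // Y Y0 YX; rewrite -lerBlDr.
apply: Psi_ge => [|_ [y [pi [Yy Upi ->]]]]; first exact: reach_neq0.
have [x Xx xy] := YX y Yy.
have Rx : reach f U X k (traj f x pi k) by exists x, pi.
have := etaP _ _ Rx (dP x y pi Xx Upi xy); rewrite -ball_normE /= ltr_norml.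
by have := Psi_le Rx; move=> ? /andP [_ ?]; lra.
Qed.

Lemma Psi_reach_continuous k {X : set 'rV[R]_n} {e : R} :
  compact X -> X !=set0 -> 0 < e -> exists2 d, 0 < d &
    forall Y, hausdorff_close d X Y -> `|P k X - P k Y| <= e.
Proof.
move=> X_compact X0 e0; have [x0 Xx0] := X0.
have [d1 d10 usc] := Psi_reach_usc k X0 e0.
have [d2 d20 lsc] := Psi_reach_lsc k X_compact e0.
exists (Num.min d1 d2) => [|Y [XY YX]]; first by rewrite lt_min d10 d20.
have Y0 : Y !=set0 by have [y Yy _] := XY x0 Xx0; exists y.
have XY1 x : X x -> exists2 y, Y y & ball x d1 y.
  by move=> /XY [y Yy xy]; exists y => //; apply: le_ball xy; rewrite ge_min lexx.
have YX2 y : Y y -> exists2 x, X x & ball x d2 y.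
  by move=> /YX [x Xx xy]; exists x => //; apply: le_ball xy; rewrite ge_min lexx orbT.
have := usc Y XY1; have := lsc Y Y0 YX2; rewrite ler_norml => ? ?.
by apply/andP; split; lra.
Qed.

End ValueFunction.

Section Stabilizability.
Context {R : realType} {n m : nat} {nrm : 'rV[R]_n -> R}
  {f : 'rV[R]_n -> 'rV[R]_m -> 'rV[R]_n} {U : set 'rV[R]_m} {A : set 'rV[R]_n}
  {alpha : 'rV[R]_n -> R} {r M p pbar ahi : R} {lam : R -> nat -> R}.
Hypothesis nrmP : is_norm nrm.
Hypothesis f_cont : continuous (fun xu : 'rV[R]_n * 'rV[R]_m => f xu.1 xu.2).
Hypothesis A_neq0 : A !=set0.
Hypothesis stab : lp_stabilizable nrm f U A r M p lam.
Hypothesis alpha_ge0 : forall x, 0 <= alpha x.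
Hypothesis alpha_le : forall x, alpha x <= ahi * distS nrm x A `^ pbar.
Hypothesis ahi_gt0 : 0 < ahi.
Hypothesis p_le_pbar : p <= pbar.

Lemma alpha_traj_le {z} : distS nrm z A <= r -> exists2 pi, inputs U pi &
  forall i, alpha (traj f z pi i) <= ahi * M `^ pbar * lam r i `^ pbar.
Proof.
case: stab => [[r0 M1 p0] [lam_mono [lam_props [_ stab_traj]]]] zr.
have [pi [Upi distP]] := stab_traj z zr; exists pi => // i.
have r_in : r \in `[0, r] by rewrite in_itv /= lexx ltW.
have z_in : distS nrm z A \in `[0, r] by rewrite in_itv /= distS_ge0 ?zr.
have lam_ge0 : 0 <= lam r i by have [_ [_]] := lam_props r r_in; apply.
rewrite (le_trans (alpha_le _)) // -mulrA ler_pM2l // -powRM ?(le_trans ler01 M1) //.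
apply: ge0_ler_powR; rewrite ?nnegrE ?distS_ge0 ?mulr_ge0 ?(le_trans ler01 M1) //.
  exact: le_trans (ltW p0) p_le_pbar.
rewrite (le_trans (distP i)) // ler_pM2l ?(lt_le_trans ltr01 M1) //.
by have [_ [lam_le _]] := lam_mono i; apply: lam_le z_in r_in _; rewrite ?zr.
Qed.

Lemma DA_traj_near {x0} : DA nrm f U A x0 -> exists K, exists2 pi, inputs U pi &
  \forall y \near x0, distS nrm (traj f y pi K) A < r.
Proof.
case: stab => [[r0 _ _] _] [pi [Upi pi_cvg]].
have [K _ KP] := cvgr_lt _ pi_cvg _ r0; exists K, pi => //.
have dist_traj_cvg : distS nrm (traj f y pi K) A @[y --> x0] --> distS nrm (traj f x0 pi K) A.
  exact: continuous_comp (traj_continuous f_cont pi K x0) (distS_continuous nrmP A_neq0 _).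
exact: cvgr_lt _ dist_traj_cvg _ (KP K (leqnn K)).
Qed.

(* From a point near [x0], first follow the inputs that bring [x0] close to [A], then the
   stabilizing inputs: this bounds [Psi] by the summable sequence [lam r k `^ pbar]. *)
Lemma Psi_reach_tail {x0} {e : R} : DA nrm f U A x0 -> 0 < e -> exists K,
  \forall y \near x0, forall Y, Y y ->
    forall L, \sum_(K <= k < L) Psi alpha (reach f U Y k) <= e.
Proof.
move=> DAx0 e0.
case: (stab) => [[r0 M1 p0] [_ [lam_props [lam_fin _]]]].
have r_in : r \in `[0, r] by rewrite in_itv /= lexx ltW.
have [_ [_ lam_ge0]] := lam_props r r_in.
have C0 : 0 < ahi * M `^ pbar by rewrite mulr_gt0 ?powR_gt0 ?(lt_le_trans ltr01 M1).
have [K [pi0 Upi0 nearK]] := DA_traj_near DAx0.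
have [J JP] := powR_tail_le lam_ge0 p0 p_le_pbar lam_fin _ (divr_gt0 e0 C0).
exists (J + K)%N; apply: filterS nearK => y yK Y Yy L.
have [pi1 Upi1 pi1P] := alpha_traj_le (ltW yK).
have Psi_le_lam i : Psi alpha (reach f U Y (i + K)) <= ahi * M `^ pbar * lam r i `^ pbar.
  apply: le_trans (pi1P i); apply: Psi_le => //.
  exists y, (cat_inputs K pi0 pi1).
  by split => //; [exact: inputs_cat | rewrite addnC traj_cat].
rewrite big_addn (le_trans (ler_sum_nat (fun i _ => Psi_le_lam i))) // -mulr_sumr.
by rewrite -ler_pdivlMl // mulrC JP.
Qed.

End Stabilizability.

Definition dH_nbhs {R : realType} {n : nat} (nrm : 'rV[R]_n -> R)
    (K : set (set 'rV[R]_n)) (X : set 'rV[R]_n) : set_system (set 'rV[R]_n) :=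
  filter_from [set d : R | 0 < d] (fun d => [set Y | K Y /\ dH nrm X Y < d]).

Instance dH_nbhs_filter {R : realType} {n : nat} (nrm : 'rV[R]_n -> R) K X :
  Filter (dH_nbhs nrm K X).
Proof.
apply: filter_from_filter => [|d1 d2 d10 d20]; first by exists 1; rewrite /= ltr01.
exists (Num.min d1 d2); first by rewrite /= lt_min d10 d20.
by move=> Y [KY XY]; split; split => //; apply: lt_le_trans XY _; rewrite ge_min lexx ?orbT.
Qed.

Lemma dH_nbhs_close {R : realType} {n : nat} {nrm : 'rV[R]_n -> R} {K X} :
  is_norm nrm -> compact X -> X !=set0 -> (forall Y, K Y -> compact Y /\ Y !=set0) ->
  forall d, 0 < d -> \forall Y \near dH_nbhs nrm K X, hausdorff_close d X Y.
Proof.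
move=> nrmP X_compact X0 K_compact d d0; have [c c0 cP] := dH_lt_ball nrmP.
exists (c * d) => [|Y [/K_compact [Y_compact Y0] XY]]; first by rewrite /= mulr_gt0.
exact: cP.
Qed.

Theorem theorem7 (R : realType) (n m : nat) (nrm : 'rV[R]_n -> R)
  (f : 'rV[R]_n -> 'rV[R]_m -> 'rV[R]_n) (U : set 'rV[R]_m) (A : set 'rV[R]_n)
  (r M p : R) (lam : R -> nat -> R)
  (alpha : 'rV[R]_n -> R) (alo ahi pbar : R) :
  is_norm nrm ->
  continuous (fun xu : 'rV[R]_n * 'rV[R]_m => f xu.1 xu.2) ->
  compact U -> U !=set0 ->
  compact A -> A !=set0 ->
  ctrl_invariant f U A ->
  lp_stabilizable nrm f U A r M p lam ->
  continuous alpha ->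
  0 < alo -> 0 < ahi -> p <= pbar ->
  (forall x, alo * distS nrm x A `^ pbar <= alpha x /\
             alpha x <= ahi * distS nrm x A `^ pbar) ->
  forall X, KD (DA nrm f U A) X ->
  forall N : set (\bar R), nbhs (Vfun alpha f U X) N ->
  exists2 delta : R, 0 < delta &
    forall Y, KD (DA nrm f U A) Y -> dH nrm X Y < delta ->
      N (Vfun alpha f U Y).
Proof.
move=> nrmP f_cont U_compact U0 _ A0 _ stab alpha_cont alo_gt0 ahi_gt0 p_le_pbar alpha_bounds
  X [X_compact [X0 [x0 [Xx0 DAx0]]]] N VXN.
have alpha_ge0 x : 0 <= alpha x.
  by apply: le_trans (alpha_bounds x).1; rewrite mulr_ge0 ?powR_ge0 ?ltW.
have alpha_le x := (alpha_bounds x).2.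
have KD_compact Y : KD (DA nrm f U A) Y -> compact Y /\ Y !=set0 by case=> ? [].
have close := dH_nbhs_close nrmP X_compact X0 KD_compact.
have V_cvg : Vfun alpha f U Y @[Y --> dH_nbhs nrm (KD (DA nrm f U A)) X] --> Vfun alpha f U X.
  apply: nneseries_cvg => [Y k|k|e e0]; first exact: Psi_ge0.
    apply/cvgrPdist_le => e e0.
    have [d d0 dP] :=
      Psi_reach_continuous f_cont U_compact U0 alpha_cont alpha_ge0 k X_compact X0 e0.
    exact: filterS (close d d0).
  have [K /nbhs_ballP [d d0 dP]] :=
    Psi_reach_tail nrmP f_cont A0 stab alpha_ge0 alpha_le ahi_gt0 p_le_pbar DAx0 e0.
  exists K; split; first exact: dP x0 (ballxx x0 d0) X Xx0.
  by apply: filterS (close d d0) => Y [/(_ x0 Xx0) [y Yy /dP /(_ Y Yy)]].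
have [d d0 dP] := V_cvg N VXN.
by exists d => // Y KY XY; exact: dP.
Qed.
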